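(* Let $(X,\tau)$ be a fuzzifying topological space and let $\varphi_P\in\Im(P(X))$ be a pre-subbase of $\tau_P$. Then $\Gamma_P(X,\tau)=[\beta_i]$ for each $i=1,\dots,5$, where $[\beta_1]=\inf_{\Re\in\Im(P(X))}\min\big(1,1-\max(0,K(\Re,X)+[\Re\subseteq\varphi_P]-1)+\sup_{\wp\le\Re}\max(0,K(\wp,X)+FF(\wp)-1)\big)$; $[\beta_2]=\inf\{\sup_{x\in X}[S\rhd^P x]: S \text{ a universal net in } X\}$; $[\beta_3]=\inf_{S\in N(X)}\sup_{x\in X}\sup_{T<S}[T\rhd^Px]$; $[\beta_4]=\inf_{S\in N(X)}\sup_{x\in X}[S\propto^Px]$; $[\beta_5]=\inf_{\Re\in\Im(P(X))}\min\big(1,1-\max(0,[\Re\subseteq F_P]+fI(\Re)-1)+\sup_{x\in X}\inf_{A:\,x\notin A}(1-\Re(A))\big)$.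
   Context: $\Im(Y)$: fuzzy subsets $Y\to[0,1]$; $P(X)$: power set. A fuzzifying topology on $X$ is $\tau\in\Im(P(X))$ with $\tau(X)=1$, $\tau(A\cap B)\ge\min(\tau(A),\tau(B))$, $\tau(\bigcup A_\lambda)\ge\inf\tau(A_\lambda)$. $N_x(A)=\sup_{x\in B\subseteq A}\tau(B)$; $Cl(A)(x)=1-N_x(X\setminus A)$; for $\mu\in\Im(X)$, $Int(\mu)(x)=\sup_{x\in B\subseteq X}\min(\tau(B),\inf_{y\in B}\mu(y))$. Pre-open degrees $\tau_P(A)=\inf_{x\in A}Int(Cl(A))(x)$; pre-closed $F_P(A)=\tau_P(X\setminus A)$; pre-neighbourhoods $N^P_x(A)=\sup_{x\in B\subseteq A}\tau_P(B)$. Pre-base: $\beta\in\Im(P(X))$ with $\beta\le\tau_P$ and $N^P_x(A)\le\sup_{x\in B\subseteq A}\beta(B)$ for all $x,A$. Pre-subbase: $\varphi_P$ such that $\varphi_P^{\Cap}$ is a pre-base, where $\varphi_P^{\Cap}(A)=\sup\{\min_i\varphi_P(B_i):B_1,\dots,B_n\subseteq X \text{ finitely many},\ \bigcap_iB_i=A\}$. For $\Re,\wp,\rho\in\Im(P(X))$: $K(\Re,X)=\inf_{x\in X}\sup_{B\ni x}\Re(B)$; $[\Re\subseteq\rho]=\inf_{B}\min(1,1-\Re(B)+\rho(B))$; $\wp\le\Re$ means $\wp(B)\le\Re(B)$ for all $B$; $FF(\wp)=1-\inf\{\delta\in[0,1]:\{B:\wp(B)>\delta\}\text{ is finite}\}$.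 The degree of fuzzifying strong compactness is $\Gamma_P(X,\tau)=\inf_{\Re}\min\big(1,1-\max(0,K(\Re,X)+[\Re\subseteq\tau_P]-1)+\sup_{\wp\le\Re}\max(0,K(\wp,X)+FF(\wp)-1)\big)$. The fuzzy finite intersection property is $fI(\Re)=\inf_{\wp\le\Re}\min\big(1,1-FF(\wp)+\sup_{x\in X}\inf_{B:\,x\notin B}(1-\wp(B))\big)$. Nets: $N(X)$ is the class of nets in $X$; a net $S$ is almost in $A$ if it is eventually in $A$, and often in $A$ if it is frequently in $A$; $S$ is universal if for every $A\subseteq X$ it is eventually in $A$ or eventually in $X\setminus A$; $T<S$ means $T$ is a subnet of $S$. $[S\rhd^Px]=\inf\{1-N^P_x(A): S\text{ not almost in }A\}$ and $[S\propto^Px]=\inf\{1-N^P_x(A):S\text{ not often in }A\}$. *)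

From HB Require Import structures.
From mathcomp Require Import all_boot all_order all_algebra.
From mathcomp Require Import all_classical all_reals.
Set Implicit Arguments.
Unset Strict Implicit.
Unset Printing Implicit Defensive.
Import Order.TTheory GRing.Theory Num.Theory.
Local Open Scope classical_set_scope.
Local Open Scope ring_scope.

Section Fuzzy.
Variable R : realType.

(* Supremum / infimum of a set of degrees in [0,1], with the fuzzy-logic
   conventions sup of the empty set = 0 and inf of the empty set = 1. *)
Definition Sup01 (S : set R) : R := sup (S `|` [set 0]).
Definition Inf01 (S : set R) : R := 1 - Sup01 [set 1 - r | r in S].

Variable X : Type.

Definition fuzzy {Y : Type} (mu : Y -> R) : Prop := forall y, 0 <= mu y <= 1.

Definition fuzzifying_topology (tau : set X -> R) : Prop :=
  fuzzy tau /\ tau setT = 1 /\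
  (forall A B, Num.min (tau A) (tau B) <= tau (A `&` B)) /\
  (forall F : set (set X), Inf01 [set tau A | A in F] <= tau (\bigcup_(A in F) A)).

Definition nbhd (tau : set X -> R) (x : X) (A : set X) : R :=
  Sup01 [set tau B | B in [set B | B x /\ B `<=` A]].

Definition fclosure (tau : set X -> R) (A : set X) : X -> R :=
  fun x => 1 - nbhd tau x (~` A).

Definition finterior (tau : set X -> R) (mu : X -> R) : X -> R :=
  fun x => Sup01 [set Num.min (tau B) (Inf01 [set mu y | y in B]) | B in [set B | B x]].

Definition preopen (tau : set X -> R) (A : set X) : R :=
  Inf01 [set finterior tau (fclosure tau A) x | x in A].

Definition preclosed (tau : set X -> R) (A : set X) : R := preopen tau (~` A).

Definition prenbhd (tau : set X -> R) (x : X) (A : set X) : R :=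
  Sup01 [set preopen tau B | B in [set B | B x /\ B `<=` A]].

Definition pre_base (tau : set X -> R) (beta : set X -> R) : Prop :=
  fuzzy beta /\ (forall B, beta B <= preopen tau B) /\
  (forall x A, prenbhd tau x A <= Sup01 [set beta B | B in [set B | B x /\ B `<=` A]]).

Definition fin_inter (phi : set X -> R) (A : set X) : R :=
  Sup01 [set r | exists (n : nat) (B : 'I_n.+1 -> set X),
           (\bigcap_(i in setT) B i) = A /\
           r = \big[Num.min/1]_(i < n.+1) phi (B i)].

Definition pre_subbase (tau : set X -> R) (phi : set X -> R) : Prop :=
  fuzzy phi /\ pre_base tau (fin_inter phi).

Definition Kdeg (Re : set X -> R) : R :=
  Inf01 [set Sup01 [set Re B | B in [set B | B x]] | x in setT].

Definition fincl (Re rho : set X -> R) : R :=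
  Inf01 [set Num.min 1 (1 - Re B + rho B) | B in setT].

Definition fle (P Re : set X -> R) : Prop := forall B, P B <= Re B.

Definition FF (P : set X -> R) : R :=
  1 - Inf01 [set d | 0 <= d <= 1 /\ finite_set [set B | d < P B]].

Definition compact_term (rho : set X -> R) (Re : set X -> R) : R :=
  Num.min 1 (1 - Num.max 0 (Kdeg Re + fincl Re rho - 1) +
    Sup01 [set Num.max 0 (Kdeg P + FF P - 1)
            | P in [set P | fuzzy P /\ fle P Re]]).

(* degree of fuzzifying strong compactness, parametrised by the family
   of "open" degrees used in [Re \subseteq .] *)
Definition Gamma_rho (rho : set X -> R) : R :=
  Inf01 [set compact_term rho Re | Re in [set Re | fuzzy Re]].

Definition GammaP (tau : set X -> R) : R := Gamma_rho (preopen tau).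

Definition fI (Re : set X -> R) : R :=
  Inf01 [set Num.min 1 (1 - FF P +
      Sup01 [set Inf01 [set 1 - P B | B in [set B | ~ B x]] | x in setT])
    | P in [set P | fuzzy P /\ fle P Re]].

Record Net := {
  ndom : Type;
  nle : ndom -> ndom -> Prop;
  nle_refl : forall a, nle a a;
  nle_trans : forall a b c, nle a b -> nle b c -> nle a c;
  ndirected : forall a b, exists c, nle a c /\ nle b c;
  ninhabited : inhabited ndom;
  nmap : ndom -> X }.

Definition eventually_in (S : Net) (A : set X) : Prop :=
  exists d0 : ndom S, forall d, nle d0 d -> A (nmap d).

Definition frequently_in (S : Net) (A : set X) : Prop :=
  forall d0 : ndom S, exists d, nle d0 d /\ A (nmap d).

Definition universal_net (S : Net) : Prop :=
  forall A : set X, eventually_in S A \/ eventually_in S (~` A).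

(* T is a subnet of S (Kelley) *)
Definition subnet (T S : Net) : Prop :=
  exists h : ndom T -> ndom S,
    (forall e : ndom T, nmap e = nmap (h e)) /\
    (forall m : ndom S, exists n : ndom T, forall p, nle n p -> nle m (h p)).

Definition preconv (tau : set X -> R) (S : Net) (x : X) : R :=
  Inf01 [set 1 - prenbhd tau x A | A in [set A | ~ eventually_in S A]].

Definition preaccum (tau : set X -> R) (S : Net) (x : X) : R :=
  Inf01 [set 1 - prenbhd tau x A | A in [set A | ~ frequently_in S A]].

Definition beta1 (phi : set X -> R) : R := Gamma_rho phi.

Definition beta2 (tau : set X -> R) : R :=
  Inf01 [set Sup01 [set preconv tau S x | x in setT]
         | S in [set S | universal_net S]].

Definition beta3 (tau : set X -> R) : R :=
  Inf01 [set Sup01 [set Sup01 [set preconv tau T x | T in [set T | subnet T S]]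
                   | x in setT]
         | S in setT].

Definition beta4 (tau : set X -> R) : R :=
  Inf01 [set Sup01 [set preaccum tau S x | x in setT] | S in setT].

Definition beta5 (tau : set X -> R) : R :=
  Inf01 [set Num.min 1 (1 - Num.max 0 (fincl Re (preclosed tau) + fI Re - 1) +
            Sup01 [set Inf01 [set 1 - Re A | A in [set A | ~ A x]] | x in setT])
         | Re in [set Re | fuzzy Re]].

End Fuzzy.

(* Gamma_P is compared with beta_1, ..., beta_4 along the cycle
   Gamma_P <= beta_1 <= beta_2 <= beta_3 <= beta_4 <= Gamma_P.
   Gamma is antitone in the family of open degrees and phi_P <= phi_P^cap <= tau_P.
   For a universal net S, phi_P restricted to the sets S is eventually outside of has
   no finite subcover, and the pre-base property bounds the pre-neighbourhoods S is
   not eventually in by such sets.  Every net has a universal subnet (ultrafilter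
   lemma), and a subnet of S is eventually outside every set S is not frequently in.
   Finally, given Re and a level r strictly between its finite-subcover degree and
   K(Re, X), no finitely many sets of Re-degree > r cover X, so the net of their finite
   subfamilies, each sent to a point avoiding it, is eventually outside each of them;
   this bounds beta_4 by 2 - K(Re, X) - [Re <= tau_P].
   Gamma_P = beta_5 by replacing Re with A |-> Re (X \ A): this exchanges pre-open and
   pre-closed degrees, turns K into one minus the degree of a common point and the
   finite-subcover degree into one minus fI. *)

From HB Require Import structures.
From mathcomp Require Import all_boot all_order all_algebra.
From mathcomp Require Import all_classical all_reals.
From mathcomp Require Import lra.
Import Order.TTheory GRing.Theory Num.Theory.
Local Open Scope classical_set_scope.
Local Open Scope ring_scope.

Section Degrees.
Context {R : realType}.
Implicit Types (S : set R) (a c r s : R).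

Lemma Sup01_ge0 S : 0 <= Sup01 S.
Proof.
rewrite /Sup01; have [hs|hs] := pselect (has_sup (S `|` [set 0])).
  by apply: (ub_le_sup hs.2); right.
by rewrite sup_out.
Qed.

Lemma le_Sup01 S r : (forall y, S y -> y <= 1) -> S r -> r <= Sup01 S.
Proof.
move=> hb hr; rewrite /Sup01; apply: ub_le_sup; last by left.
exists 1 => y [/hb //|->]; exact: ler01.
Qed.

Lemma Sup01_le S c : 0 <= c -> (forall y, S y -> y <= c) -> Sup01 S <= c.
Proof.
move=> c0 hc; rewrite /Sup01; apply: ge_sup; first by exists 0; right.
by move=> y [/hc //|->].
Qed.

Lemma Sup01_le1 S : (forall y, S y -> y <= 1) -> Sup01 S <= 1.
Proof. by move=> h; apply: Sup01_le => //; exact: ler01. Qed.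

Lemma Sup01_gt S c : 0 <= c -> c < Sup01 S -> exists2 y, S y & c < y.
Proof.
move=> c0 hc; have [|y [Sy|->] cy] := sup_gt _ hc; first by exists 0; right.
  by exists y.
by move: (le_lt_trans c0 cy); rewrite ltxx.
Qed.

Lemma Inf01_le1 S : Inf01 S <= 1.
Proof. rewrite /Inf01; have := Sup01_ge0 [set 1 - r | r in S]; lra. Qed.

Lemma Inf01_ge0 S : (forall y, S y -> 0 <= y) -> 0 <= Inf01 S.
Proof.
move=> h; rewrite /Inf01 subr_ge0; apply: Sup01_le1 => _ [y /h Sy <-]; lra.
Qed.

Lemma Inf01_le S r : (forall y, S y -> 0 <= y) -> S r -> Inf01 S <= r.
Proof.
move=> h Sr; rewrite /Inf01.
suff : 1 - r <= Sup01 [set 1 - r | r in S] by lra.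
by apply: le_Sup01; [move=> _ [y /h Sy <-]; lra|exists r].
Qed.

Lemma le_Inf01 S c : c <= 1 -> (forall y, S y -> c <= y) -> c <= Inf01 S.
Proof.
move=> c1 h; rewrite /Inf01.
suff : Sup01 [set 1 - r | r in S] <= 1 - c by lra.
by apply: Sup01_le; [lra|move=> _ [y /h Sy <-]; lra].
Qed.

Lemma min1_sub_max0 a s : 0 <= s ->
  Num.min 1 (1 - Num.max 0 a + s) = Num.min 1 (1 - a + s).
Proof.
move=> s0; case: (lerP 0 a) => ha.
  by case: (lerP 1 (1 - a + s)) => h; lra.
by case: (lerP 1 (1 - 0 + s)) => h1; case: (lerP 1 (1 - a + s)) => h2; lra.
Qed.

Lemma oneB_min1 a : 1 - Num.min 1 a = Num.max 0 (1 - a).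
Proof. by case: (lerP 1 a) => h; case: (lerP 0 (1 - a)) => h'; lra. Qed.

Lemma Inf01_oneB T (f : T -> R) (A : set T) :
  Inf01 [set 1 - f y | y in A] = 1 - Sup01 [set f y | y in A].
Proof.
rewrite /Inf01 image_comp; congr (1 - Sup01 _).
by apply: eq_imagel => y _ /=; rewrite subKr.
Qed.

End Degrees.

Lemma eq_image_involutive {T U} {g : T -> T} {f f' : T -> U} {A A' : set T} :
  involutive g -> (forall x, A' (g x) <-> A x) -> (forall x, A x -> f x = f' (g x)) ->
  [set f x | x in A] = [set f' y | y in A'].
Proof.
move=> gK AA' ff'; apply/seteqP; split => _ [x Ax <-].
  by exists (g x); [exact/AA'|rewrite ff'].
have Agx : A (g x) by apply/AA'; rewrite gK.
by exists (g x) => //; rewrite ff' // gK.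
Qed.

Section FuzzifyingCompactness.
Context {R : realType} {X : Type}.
Implicit Types (S T : Net X) (A B C : set X) (F G : set (set X)).
Implicit Types (Re P phi rho tau : set X -> R) (x : X).

Section Nets.

Lemma filter_bigcap_finite (F : set_system X) {FF : Filter F} G :
  finite_set G -> G `<=` F -> F (\bigcap_(B in G) B).
Proof. by move=> /finite_fsetP [D ->]; exact: (@filter_bigI _ _ D id). Qed.

Global Instance eventually_in_filter S : ProperFilter (eventually_in S).
Proof.
apply: Build_ProperFilter_ex => [A [d hd]|].
  by exists (nmap d); apply/hd/nle_refl.
split.
- by case: (ninhabited S) => d; exists d.
- move=> A B [d1 h1] [d2 h2]; have [c [c1 c2]] := ndirected d1 d2.
  by exists c => e ce; split; [apply: h1|apply: h2]; exact: nle_trans ce.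
- by move=> A B AB [d hd]; exists d => e /hd /AB.
Qed.

Lemma not_frequently_in S A : ~ frequently_in S A <-> eventually_in S (~` A).
Proof.
split=> [nfr|[d1 h1] fr]; last by have [e [/h1 nAe Ae]] := fr d1.
apply: contrapT => nev; apply: nfr => d0; apply: contrapT => nfr.
by apply: nev; exists d0 => d hd Ad; apply: nfr; exists d.
Qed.

Lemma eventually_inC S A : eventually_in S (~` A) -> ~ eventually_in S A.
Proof. by move=> evC ev; have [x []] := filter_ex (filterI ev evC). Qed.

Lemma subnet_eventually {T S A} :
  subnet T S -> eventually_in S A -> eventually_in T A.
Proof.
move=> [h [hm hc]] [d hd]; have [n hn] := hc d.
by exists n => p /hn /hd; rewrite hm.
Qed.

(* Kelley's construction: the net of pairs (d, A) with A in U and S d in A.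
   Index types use [X -> Prop], as [set X] lives in a universe too large for [ndom]. *)
Lemma subnet_of_filter S (U : set_system X) : Filter U ->
  (forall A, U A -> frequently_in S A) ->
  exists T, subnet T S /\ U `<=` eventually_in T.
Proof.
move=> FU Ufr.
pose D : Type := {p : ndom S * (X -> Prop) | U p.2 /\ p.2 (nmap p.1)}.
pose le (p q : D) := nle (sval p).1 (sval q).1 /\ (sval q).2 `<=` (sval p).2.
have D_refl p : le p p by split => //; exact: nle_refl.
have D_trans p q r : le p q -> le q r -> le p r.
  move=> [pq1 pq2] [qr1 qr2]; split; first exact: nle_trans qr1.
  exact: subset_trans pq2.
have D_directed : forall p q, exists r, le p r /\ le q r.
  move=> [[d1 A1] [U1 h1]] [[d2 A2] [U2 h2]].
  have [c [c1 c2]] := ndirected d1 d2.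
  have UA : U (A1 `&` A2) by exact: filterI.
  have [e [ce Ae]] := Ufr _ UA c.
  exists (exist _ (e, A1 `&` A2) (conj UA Ae)).
  by split; split => /=; by [apply: nle_trans ce|move=> x []].
have UT : U setT by exact: filterT.
have D_inhabited : inhabited D.
  by case: (ninhabited S) => d0; constructor; exact: (exist _ (d0, setT) (conj UT I)).
exists (Build_Net D_refl D_trans D_directed D_inhabited (fun p => nmap (sval p).1)); split.
  exists (fun p : D => (sval p).1); split => // m.
  by exists (exist _ (m, setT) (conj UT I)) => p [].
move=> B UB; case: (ninhabited S) => d0; have [e [_ Be]] := Ufr _ UB d0.
exists (exist _ (e, B) (conj UB Be)) => -[[d C] [_ Cd]] [_ /= CB].
exact: CB.
Qed.

Lemma exists_universal_subnet S : exists T, subnet T S /\ universal_net T.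
Proof.
have [U [UU evU]] := ultraFilterLemma (eventually_in_filter S).
have Ufr A : U A -> frequently_in S A.
  move=> UA; apply: contrapT => /not_frequently_in /evU UnA.
  by have [x []] := filter_ex (filterI UA UnA).
have [T [TS UT]] := @subnet_of_filter S U _ Ufr.
by exists T; split => // A; case: (in_ultra_setVsetC A UU) => /UT; [left|right].
Qed.

(* The net of finite subfamilies of G, each sent to a point outside all of its members. *)
Lemma exists_net_avoiding G :
  (forall H, finite_set H -> H `<=` G -> exists x, forall B, H B -> ~ B x) ->
  exists S : Net X, forall B, G B -> eventually_in S (~` B).
Proof.
move=> avoid.
pose D : Type := {H : (X -> Prop) -> Prop | finite_set H /\ H `<=` G}.
pose le (p q : D) := sval p `<=` sval q.
have D_refl p : le p p by [].
have D_trans p q r : le p q -> le q r -> le p r.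
  by move=> pq qr; exact: subset_trans qr.
have D_directed : forall p q, exists r, le p r /\ le q r.
  move=> [H1 [f1 s1]] [H2 [f2 s2]].
  have hU : finite_set (H1 `|` H2) /\ (H1 `|` H2) `<=` G.
    by split; [rewrite finite_setU|move=> B [/s1|/s2]].
  by exists (exist _ (H1 `|` H2) hU); split => B hB /=; [left|right].
have D_inhabited : inhabited D by constructor; exists set0; split; [exact: finite_set0|].
pose f (p : D) := projT1 (cid (avoid _ (proj1 (svalP p)) (proj2 (svalP p)))).
have f_avoids p B : sval p B -> ~ B (f p).
  by rewrite /f; case: cid => x hx /=; exact: hx.
exists (Build_Net D_refl D_trans D_directed D_inhabited f) => B GB.
have fin1 : finite_set [set B] /\ [set B] `<=` G.
  by split; [exact: finite_set1|move=> C ->].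
by exists (exist _ [set B] fin1) => q hq; apply: f_avoids; exact: hq.
Qed.

End Nets.

Section CompactnessDegree.

Definition finite_subcover_deg Re : R :=
  Sup01 [set Num.max 0 (Kdeg P + FF P - 1) | P in [set P | fuzzy P /\ fle P Re]].

Lemma preopen_ge0 tau A : 0 <= preopen tau A.
Proof. by apply: Inf01_ge0 => _ [x _ <-]; exact: Sup01_ge0. Qed.

Lemma preopen_le1 tau A : preopen tau A <= 1.
Proof. exact: Inf01_le1. Qed.

Lemma prenbhd_le1 tau x A : prenbhd tau x A <= 1.
Proof. by apply: Sup01_le1 => _ [B _ <-]; exact: preopen_le1. Qed.

Lemma preopen_le_prenbhd tau {x A B} :
  B x -> B `<=` A -> preopen tau B <= prenbhd tau x A.
Proof.
by move=> Bx BA; apply: le_Sup01 => [_ [C _ <-]|]; [exact: preopen_le1|exists B].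
Qed.

Lemma Kdeg_le1 Re : Kdeg Re <= 1.
Proof. exact: Inf01_le1. Qed.

Lemma Kdeg_le Re x : Kdeg Re <= Sup01 [set Re B | B in [set B | B x]].
Proof.
by apply: Inf01_le => [_ [y _ <-]|]; [exact: Sup01_ge0|exists x].
Qed.

Lemma FF_le1 P : FF P <= 1.
Proof.
suff : 0 <= Inf01 [set d | 0 <= d <= 1 /\ finite_set [set B | d < P B]].
  by rewrite /FF; lra.
by apply: Inf01_ge0 => d [/andP[]].
Qed.

Lemma fincl_le1 Re rho : fincl Re rho <= 1.
Proof. exact: Inf01_le1. Qed.

Lemma fincl_le {Re rho} B : fuzzy Re -> (forall C, 0 <= rho C) ->
  fincl Re rho <= Num.min 1 (1 - Re B + rho B).
Proof.
move=> ReF rho0; apply: Inf01_le; last by exists B.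
move=> _ [C _ <-]; rewrite le_min ler01 /=.
by have := rho0 C; move: (ReF C) => /andP[? ?]; lra.
Qed.

Lemma fincl_le_fincl {Re rho1 rho2} : fuzzy Re -> (forall B, 0 <= rho1 B) ->
  (forall B, rho1 B <= rho2 B) -> fincl Re rho1 <= fincl Re rho2.
Proof.
move=> ReF rho0 le12; apply: le_Inf01 => [|_ [B _ <-]]; first exact: fincl_le1.
apply: le_trans (fincl_le B ReF rho0) _.
by apply: le_min2 => //; rewrite lerD2l.
Qed.

Lemma compact_termE rho Re : compact_term rho Re =
  Num.min 1 (2 - Kdeg Re - fincl Re rho + finite_subcover_deg Re).
Proof.
rewrite /compact_term min1_sub_max0; last exact: Sup01_ge0.
by congr (Num.min 1 _); rewrite /finite_subcover_deg; lra.
Qed.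

Lemma compact_term_ge0 rho Re : 0 <= compact_term rho Re.
Proof.
rewrite compact_termE le_min ler01 /=.
have := Kdeg_le1 Re; have := fincl_le1 Re rho.
have : 0 <= finite_subcover_deg Re by exact: Sup01_ge0.
lra.
Qed.

Lemma Gamma_le_compact_term rho Re : fuzzy Re -> Gamma_rho rho <= compact_term rho Re.
Proof.
by move=> ReF; apply: Inf01_le => [_ [Q _ <-]|]; [exact: compact_term_ge0|exists Re].
Qed.

Lemma Gamma_rho_le rho1 rho2 : (forall B, 0 <= rho1 B) ->
  (forall B, rho1 B <= rho2 B) -> Gamma_rho rho2 <= Gamma_rho rho1.
Proof.
move=> rho0 le12; apply: le_Inf01 => [|_ [Re ReF <-]]; first exact: Inf01_le1.
apply: le_trans (Gamma_le_compact_term rho2 _ ReF) _.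
rewrite !compact_termE; apply: le_min2 => //.
by have := fincl_le_fincl ReF rho0 le12; lra.
Qed.

Lemma Kdeg_add_FF_le1 P S : (forall B, 0 < P B -> eventually_in S (~` B)) ->
  Kdeg P + FF P <= 1.
Proof.
move=> avoidP; rewrite /FF.
suff : Kdeg P <= Inf01 [set d | 0 <= d <= 1 /\ finite_set [set B | d < P B]] by lra.
apply: le_Inf01 => [|d [/andP[d0 _] fin]]; first exact: Kdeg_le1.
have [y hy] : exists y, forall B, d < P B -> ~ B y.
  have : eventually_in S (\bigcap_(C in setC @` [set B | d < P B]) C).
    apply: filter_bigcap_finite; first exact: finite_image.
    by move=> _ [B dB <-]; apply: avoidP; exact: le_lt_trans dB.
  by case/filter_ex => y hy; exists y => B dB; apply: (hy (~` B)); exists B.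
apply: le_trans (Kdeg_le P y) _; apply: Sup01_le => // _ [B By <-].
by rewrite leNgt; apply/negP => /hy.
Qed.

(* The witness family is [rho] restricted to the sets that [S] eventually avoids. *)
Lemma Gamma_le_net rho S c : (forall B, 0 <= rho B <= 1) -> 0 <= c ->
  (forall x, 1 - c <= Sup01 [set rho B | B in [set B | B x /\ eventually_in S (~` B)]]) ->
  Gamma_rho rho <= c.
Proof.
move=> rhoF c0 cover.
pose Re A := if pselect (eventually_in S (~` A)) then rho A else 0.
have ReF : fuzzy Re.
  by move=> A; rewrite /Re; case: pselect => h; [exact: rhoF|rewrite lexx ler01].
have Re_le A : Re A <= rho A.
  by rewrite /Re; case: pselect => h //; case/andP: (rhoF A).
apply: le_trans (Gamma_le_compact_term rho _ ReF) _; rewrite compact_termE.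
have sub0 : finite_subcover_deg Re <= 0.
  apply: Sup01_le => // _ [P [_ PRe] <-]; rewrite ge_max lexx /=.
  suff : Kdeg P + FF P <= 1 by lra.
  apply: (Kdeg_add_FF_le1 _ S) => B PB.
  have := lt_le_trans PB (PRe B).
  by rewrite /Re; case: pselect => // h; rewrite ltxx.
have incl1 : 1 <= fincl Re rho.
  apply: le_Inf01 => // _ [B _ <-]; rewrite le_min lexx /=.
  by have := Re_le B; lra.
have Kc : 1 - c <= Kdeg Re.
  apply: le_Inf01 => [|_ [x _ <-]]; first lra.
  apply: le_trans (cover x) _; apply: Sup01_le; first exact: Sup01_ge0.
  move=> _ [B [Bx evB] <-]; apply: le_Sup01 => [_ [C _ <-]|].
    by case/andP: (ReF C).
  by exists B => //; rewrite /Re; case: pselect.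
by rewrite ge_min; apply/orP; right; lra.
Qed.

End CompactnessDegree.

Section Chain.

Lemma le_fin_inter phi B : fuzzy phi -> phi B <= fin_inter phi B.
Proof.
move=> phiF; have capB : \bigcap_(i in [set: 'I_1]) (fun=> B) i = B.
  by apply/seteqP; split => [y /(_ ord0 I)|y By i _].
apply: le_trans (_ : \big[Num.min/1]_(i < 1) phi B <= _).
  by apply: le_bigmin => [|i _]; [case/andP: (phiF B)|].
apply: le_Sup01 => [_ [n [Bs [_ ->]]]|]; first exact: bigmin_le_id.
by exists 0%N, (fun=> B).
Qed.

Lemma Gamma_le_beta1 tau phi : pre_subbase tau phi -> GammaP tau <= beta1 phi.
Proof.
move=> [phiF [_ [le_preopen _]]]; apply: Gamma_rho_le => B.
  by case/andP: (phiF B).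
exact: le_trans (le_fin_inter _ B phiF) (le_preopen B).
Qed.

Lemma Gamma_le_preconv tau rho S : (forall B, 0 <= rho B <= 1) ->
  (forall x A, ~ eventually_in S A ->
    prenbhd tau x A <= Sup01 [set rho B | B in [set B | B x /\ eventually_in S (~` B)]]) ->
  Gamma_rho rho <= Sup01 [set preconv tau S x | x in setT].
Proof.
move=> rhoF nbhd_le; apply: Gamma_le_net rhoF (Sup01_ge0 _) _ => x.
have : preconv tau S x <= Sup01 [set preconv tau S x | x in setT].
  by apply: le_Sup01 => [_ [y _ <-]|]; [exact: Inf01_le1|exists x].
suff : 1 - preconv tau S x <=
    Sup01 [set rho B | B in [set B | B x /\ eventually_in S (~` B)]] by lra.
rewrite /preconv Inf01_oneB subKr; apply: Sup01_le => [|_ [A nevA <-]].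
  exact: Sup01_ge0.
exact: nbhd_le.
Qed.

(* A universal net that is not eventually in a finite intersection is eventually
   outside one of its factors. *)
Lemma fin_inter_le_avoided phi S x B : fuzzy phi -> universal_net S -> B x ->
  ~ eventually_in S B ->
  fin_inter phi B <= Sup01 [set phi C | C in [set C | C x /\ eventually_in S (~` C)]].
Proof.
move=> phiF univ Bx nevB; apply: Sup01_le => [|r [n [Bs [capB ->]]]].
  exact: Sup01_ge0.
have [i nevBi] : exists i, ~ eventually_in S (Bs i).
  apply: contrapT => allev; apply: nevB; rewrite -capB.
  apply: filterS (@filter_bigcap_finite _ _ (range Bs) _ _).
  - by move=> y capy i _; apply: capy; exists i.
  - exact/finite_image/finite_finset.
  - by move=> _ [i _ <-]; apply: contrapT => nevBi; apply: allev; exists i.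
have evC : eventually_in S (~` Bs i) by case: (univ (Bs i)).
apply: le_trans (bigmin_le _ i _) _; apply: le_Sup01.
  by move=> _ [C _ <-]; case/andP: (phiF C).
by exists (Bs i) => //; split => //; move: Bx; rewrite -capB => /(_ i I).
Qed.

Lemma beta1_le_beta2 tau phi : pre_subbase tau phi -> beta1 phi <= beta2 tau.
Proof.
move=> [phiF [_ [_ nbhd_le]]]; apply: le_Inf01 => [|_ [S univ <-]].
  exact: Inf01_le1.
apply: Gamma_le_preconv => // x A nevA; apply: le_trans (nbhd_le x A) _.
apply: Sup01_le => [|_ [B [Bx BA] <-]]; first exact: Sup01_ge0.
by apply: fin_inter_le_avoided => // evB; apply/nevA/(filterS BA).
Qed.

Lemma beta2_le_beta3 tau : beta2 tau <= beta3 tau.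
Proof.
apply: le_Inf01 => [|_ [S _ <-]]; first exact: Inf01_le1.
have [T [TS univT]] := exists_universal_subnet S.
apply: le_trans (_ : _ <= Sup01 [set preconv tau T x | x in setT]) _.
  by apply: Inf01_le => [_ [S' _ <-]|]; [exact: Sup01_ge0|exists T].
apply: Sup01_le => [|_ [x _ <-]]; first exact: Sup01_ge0.
apply: le_trans (_ : _ <= Sup01 [set preconv tau T' x | T' in [set T' | subnet T' S]]) _.
  by apply: le_Sup01 => [_ [T' _ <-]|]; [exact: Inf01_le1|exists T].
apply: le_Sup01 => [_ [y _ <-]|]; last by exists x.
by apply: Sup01_le1 => _ [T' _ <-]; exact: Inf01_le1.
Qed.

Lemma preconv_le_preaccum tau T S x :
  subnet T S -> preconv tau T x <= preaccum tau S x.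
Proof.
move=> TS; apply: le_Inf01 => [|_ [A nfrA <-]]; first exact: Inf01_le1.
apply: Inf01_le => [_ [C _ <-]|]; first by have := prenbhd_le1 tau x C; lra.
exists A => //; apply: eventually_inC.
exact/(subnet_eventually TS)/not_frequently_in.
Qed.

Lemma beta3_le_beta4 tau : beta3 tau <= beta4 tau.
Proof.
apply: le_Inf01 => [|_ [S _ <-]]; first exact: Inf01_le1.
apply: le_trans (_ : _ <= Sup01 [set Sup01 [set preconv tau T x | T in [set T | subnet T S]]
  | x in setT]) _.
  by apply: Inf01_le => [_ [S' _ <-]|]; [exact: Sup01_ge0|exists S].
apply: Sup01_le => [|_ [x _ <-]]; first exact: Sup01_ge0.
apply: le_trans (_ : _ <= preaccum tau S x) _.
  apply: Sup01_le => [|_ [T TS <-]]; last exact: preconv_le_preaccum.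
  by apply: Inf01_ge0 => _ [A _ <-]; have := prenbhd_le1 tau x A; lra.
by apply: le_Sup01 => [_ [y _ <-]|]; [exact: Inf01_le1|exists x].
Qed.

End Chain.

Section Accumulation.

Lemma finite_cover_le_subcover Re F r : fuzzy Re -> r <= 1 -> finite_set F ->
  (forall x, exists2 B, F B & B x) -> (forall B, F B -> r <= Re B) ->
  r <= finite_subcover_deg Re.
Proof.
move=> ReF r1 finF coverF rF.
pose P B := if pselect (F B) then Re B else 0.
have PF : fuzzy P.
  by move=> B; rewrite /P; case: pselect => h; [exact: ReF|rewrite lexx ler01].
have PRe : fle P Re.
  by move=> B; rewrite /P; case: pselect => h //; case/andP: (ReF B).
have KP : r <= Kdeg P.
  apply: le_Inf01 => // _ [x _ <-]; have [B FB Bx] := coverF x.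
  apply: le_trans (_ : P B <= _).
    by rewrite /P; case: pselect => h; [exact: rF|case: (h FB)].
  by apply: le_Sup01 => [_ [C _ <-]|]; [case/andP: (PF C)|exists B].
have FFP : FF P = 1.
  suff : Inf01 [set d | 0 <= d <= 1 /\ finite_set [set B | d < P B]] <= 0.
    have : 0 <= Inf01 [set d | 0 <= d <= 1 /\ finite_set [set B | d < P B]].
      by apply: Inf01_ge0 => d [/andP[]].
    by rewrite /FF; lra.
  apply: Inf01_le => [d [/andP[d0 _] _] //|]; split; first by rewrite lexx ler01.
  by apply: sub_finite_set finF => B /=; rewrite /P; case: pselect => h //; rewrite ltxx.
apply: le_trans (_ : Num.max 0 (Kdeg P + FF P - 1) <= _).
  by rewrite le_max FFP; apply/orP; right; lra.
apply: le_Sup01 => [_ [Q _ <-]|]; last by exists P.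
by rewrite ge_max ler01 /=; have := Kdeg_le1 Q; have := FF_le1 Q; lra.
Qed.

Lemma net_avoiding_superlevel {Re r} : fuzzy Re -> r <= 1 ->
  finite_subcover_deg Re < r ->
  exists S, forall B, r < Re B -> eventually_in S (~` B).
Proof.
move=> ReF r1 subr; apply: exists_net_avoiding => F finF sF.
apply: contrapT => nopoint; suff : r <= finite_subcover_deg Re by lra.
apply: finite_cover_le_subcover ReF r1 finF _ (fun B FB => ltW (sF B FB)) => x.
apply: contrapT => nox; apply: nopoint; exists x => B FB Bx.
by apply: nox; exists B.
Qed.

Lemma beta4_le_level tau {Re r} : fuzzy Re ->
  finite_subcover_deg Re < r -> r < Kdeg Re ->
  beta4 tau <= 2 - fincl Re (preopen tau) - r.
Proof.
move=> ReF subr rK; set I := fincl Re (preopen tau).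
have r0 : 0 <= r by apply: le_trans (ltW subr); exact: Sup01_ge0.
have r1 : r < 1 by apply: lt_le_trans rK (Kdeg_le1 Re).
have I1 : I <= 1 by exact: fincl_le1.
have [S avoidS] := net_avoiding_superlevel ReF (ltW r1) subr.
apply: le_trans (_ : _ <= Sup01 [set preaccum tau S x | x in setT]) _.
  by apply: Inf01_le => [_ [S' _ <-]|]; [exact: Sup01_ge0|exists S].
apply: Sup01_le => [|_ [x _ <-]]; first lra.
have [_ [B Bx <-] rB] := Sup01_gt _ _ r0 (lt_le_trans rK (Kdeg_le Re x)).
have nfrB : ~ frequently_in S B by apply/not_frequently_in/avoidS.
have : preaccum tau S x <= 1 - prenbhd tau x B.
  apply: Inf01_le => [_ [C _ <-]|]; last by exists B.
  by have := prenbhd_le1 tau x C; lra.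
have := preopen_le_prenbhd tau Bx (@subset_refl _ B).
have : I <= 1 - Re B + preopen tau B.
  apply: le_trans (fincl_le B ReF (preopen_ge0 tau)) _.
  by rewrite ge_min lexx orbT.
lra.
Qed.

Lemma beta4_le_Gamma tau : beta4 tau <= GammaP tau.
Proof.
apply: le_Inf01 => [|_ [Re ReF <-]]; first exact: Inf01_le1.
rewrite compact_termE le_min Inf01_le1 /=.
set K := Kdeg Re; set I := fincl Re (preopen tau); set s := finite_subcover_deg Re.
have s0 : 0 <= s by exact: Sup01_ge0.
have b1 : beta4 tau <= 1 by exact: Inf01_le1.
have I1 : I <= 1 by exact: fincl_le1.
have [Ks|sK] := lerP K s; first lra.
suff : K <= 2 - I - beta4 tau by lra.
rewrite leNgt; apply/negP => ltK.
pose m := Num.max s (2 - I - beta4 tau).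
have sm : s <= m by rewrite le_max lexx.
have bm : 2 - I - beta4 tau <= m by rewrite le_max lexx orbT.
have mK : m < K by rewrite gt_max sK ltK.
pose r := (m + K) / 2.
have mr : m < r by rewrite /r; lra.
have rK : r < K by rewrite /r; lra.
by have := beta4_le_level tau ReF (le_lt_trans sm mr) rK; rewrite -/I; lra.
Qed.

End Accumulation.

Section Complements.

Definition fcompl Re : set X -> R := fun A => Re (~` A).

Definition common_point_deg Re : R :=
  Sup01 [set Inf01 [set 1 - Re A | A in [set A | ~ A x]] | x in setT].

Lemma fcomplK : involutive fcompl.
Proof. by move=> Re; apply/funext => A; rewrite /fcompl setCK. Qed.

Lemma fuzzy_fcompl Re : fuzzy (fcompl Re) = fuzzy Re.
Proof.
by apply/propext; split => ReF A; [rewrite -[A]setCK|]; exact: ReF.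
Qed.

Lemma fle_fcompl P Re : fle (fcompl P) Re = fle P (fcompl Re).
Proof.
by apply/propext; split => PRe A; have := PRe (~` A); rewrite /fcompl setCK.
Qed.

Lemma Kdeg_fcompl Re : Kdeg (fcompl Re) = 1 - common_point_deg Re.
Proof.
rewrite /Kdeg /common_point_deg -Inf01_oneB; congr Inf01.
apply: eq_imagel => x _; rewrite Inf01_oneB subKr; congr Sup01.
apply: (eq_image_involutive setCK) => // B /=.
by split => [/contrapT|Bx /(_ Bx)].
Qed.

Lemma FF_fcompl P : FF (fcompl P) = FF P.
Proof.
have finC Q d : finite_set [set B | d < Q B] -> finite_set [set B | d < fcompl Q B].
  move=> /(finite_image setC); apply: sub_finite_set => B dB.
  by exists (~` B); rewrite ?setCK.
rewrite /FF; congr (1 - Inf01 _); apply/seteqP; split => d [d01 fin]; split => //.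
  by rewrite -[P]fcomplK; exact: finC.
exact: finC.
Qed.

Lemma fincl_fcompl Re tau : fincl (fcompl Re) (preopen tau) = fincl Re (preclosed tau).
Proof.
rewrite /fincl; apply: congr1.
apply: (eq_image_involutive setCK) => [//|B _].
by rewrite /preclosed setCK.
Qed.

Lemma fI_fcompl Re : fI Re = 1 - finite_subcover_deg (fcompl Re).
Proof.
rewrite /fI /finite_subcover_deg -Inf01_oneB; congr Inf01.
apply: (eq_image_involutive fcomplK) => [P|P _] /=.
  by rewrite fuzzy_fcompl fle_fcompl fcomplK.
rewrite Kdeg_fcompl FF_fcompl -/(common_point_deg P).
by rewrite -[LHS](subKr 1) oneB_min1; congr (1 - Num.max 0 _); lra.
Qed.

Lemma compact_term_fcompl tau Re : compact_term (preopen tau) (fcompl Re) =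
  Num.min 1 (1 - Num.max 0 (fincl Re (preclosed tau) + fI Re - 1) + common_point_deg Re).
Proof.
rewrite compact_termE Kdeg_fcompl fincl_fcompl min1_sub_max0; last exact: Sup01_ge0.
by rewrite fI_fcompl; congr (Num.min 1 _); lra.
Qed.

Lemma Gamma_eq_beta5 tau : GammaP tau = beta5 tau.
Proof.
rewrite /GammaP /Gamma_rho /beta5; congr Inf01.
apply: (eq_image_involutive fcomplK) => [Re|Re _] /=; first by rewrite fuzzy_fcompl.
by rewrite -[in LHS](fcomplK Re) compact_term_fcompl.
Qed.

End Complements.

End FuzzifyingCompactness.

Theorem theorem3p1 (R : realType) (X : Type) (tau : set X -> R) (phiP : set X -> R) :
  fuzzifying_topology tau -> pre_subbase tau phiP ->
  GammaP tau = beta1 phiP /\ GammaP tau = beta2 tau /\ GammaP tau = beta3 tau /\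
  GammaP tau = beta4 tau /\ GammaP tau = beta5 tau.
Proof.
move=> _ subbase.
have := Gamma_le_beta1 tau phiP subbase; have := beta1_le_beta2 tau phiP subbase.
have := beta2_le_beta3 tau; have := beta3_le_beta4 tau; have := beta4_le_Gamma tau.
rewrite -Gamma_eq_beta5.
move: (GammaP tau) (beta1 phiP) (beta2 tau) (beta3 tau) (beta4 tau) => g b1 b2 b3 b4 *.
by do !split; apply/le_anti/andP; split; lra.
Qed.
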